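(* For all $k\geq 1$ there is $N$ such that every irreducible graph $G=(V,E)$ with $|V|\geq N$ contains an element of $Irr(k)$ as an induced subgraph.
   Context: For a graph $G=(V,E)$ define $x\sim_G y$ if for all $z\in V\setminus\{x,y\}$, $xz\in E$ iff $yz\in E$; this is an equivalence relation. $G$ is irreducible if every $\sim_G$-class has size $1$. For $k\ge1$, $Irr(k)$ is the set of all graphs on the vertex set $\{a_1,\dots,a_k,b_1,\dots,b_k\}$ ($2k$ distinct vertices) such that one of the following holds: (i) for all $i,j\in[k]$, $a_ib_j\in E$ iff $i\le j$; (ii) for all $i,j\in[k]$, $a_ib_j\in E$ iff $i=j$; (iii) for all $i,j\in[k]$, $a_ib_j\in E$ iff $i\ne j$. (Edges among the $a_i$'s and among the $b_j$'s are unrestricted.) *)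

From mathcomp Require Import all_boot.
Set Implicit Arguments. Unset Strict Implicit. Unset Printing Implicit Defensive.

Definition simple_graph (T : finType) (e : rel T) : Prop :=
  symmetric e /\ irreflexive e.

Definition twin (T : finType) (e : rel T) (x y : T) : Prop :=
  forall z : T, z != x -> z != y -> e x z = e y z.

Definition irreducible_graph (T : finType) (e : rel T) : Prop :=
  forall x y : T, twin e x y -> x = y.

(* Vertex set {a_1..a_k, b_1..b_k}: a_i = inl i, b_j = inr j (0-based indices). *)
Definition irr_vertex (k : nat) : finType := ('I_k + 'I_k)%type.

Definition in_Irr (k : nat) (H : rel (irr_vertex k)) : Prop :=
  simple_graph H /\
  ((forall i j : 'I_k, H (inl i) (inr j) = (i <= j)%N) \/
   (forall i j : 'I_k, H (inl i) (inr j) = (i == j)) \/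
   (forall i j : 'I_k, H (inl i) (inr j) = (i != j))).

Definition induced_subgraph (S T : finType) (H : rel S) (e : rel T) : Prop :=
  exists f : S -> T, injective f /\ forall x y : S, H x y = e (f x) (f y).

Definition contains_Irr (k : nat) (T : finType) (e : rel T) : Prop :=
  exists H : rel (irr_vertex k), in_Irr H /\ induced_subgraph H e.

(* In an irreducible graph any two distinct vertices u, w are distinguished by a
   third vertex z.  Halving a vertex set S repeatedly (keep the larger of the two
   classes of S - z according to adjacency to z, and set aside whichever of u, w
   falls outside it) yields, when |V| >= 2^m, vertices v_0, ..., v_m and
   x_0, ..., x_(m-1) such that the adjacency of v_i and x_j is a bit d_j depending
   only on j when i > j, and is ~~ d_j when i = j.  Keeping the indices with the
   majority value D of d and running a greedy ordered Ramsey argument on the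
   colours of the pairs i < j gives k+1 indices on which adjacency is C above the
   diagonal, D below it and ~~ D on it.  The case C = D gives a matching or a
   co-matching, the case C <> D a half graph. *)

From mathcomp Require Import all_boot zify.
Set Implicit Arguments. Unset Strict Implicit. Unset Printing Implicit Defensive.

Lemma count_majority (B : Type) (p : pred B) (s : seq B) :
  exists b : bool, size s <= (count (fun y => p y == b) s).*2.
Proof.
have [b_true b_false] : count (fun y => p y == true) s = count p s /\
    count (fun y => p y == false) s = count (predC p) s.
  by split; apply: eq_count => y /=; case: (p y).
have := count_predC p s.
by case: (leqP (size s) (count p s).*2) => h; [exists true | exists false];
  rewrite ?b_true ?b_false; lia.
Qed.

Lemma count_uniq_le1 (A : eqType) (p : pred A) (s : seq A) :
  uniq s -> (forall a b, p a -> p b -> a = b) -> count p s <= 1.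
Proof.
move=> us p_eq; have [/hasP [a _ pa] | /negbTE] := boolP (has p s).
  rewrite (eq_count (a2 := pred1 a)) ?count_uniq_mem ?leq_b1 // => y.
  by apply/idP/eqP => [/p_eq/(_ pa) | ->].
by rewrite has_count lt0n => /negbFE/eqP ->.
Qed.

Lemma inj_case_sum (A B C : Type) (f : A -> C) (g : B -> C) :
  injective f -> injective g -> (forall a b, f a <> g b) ->
  injective (fun u => match u with inl a => f a | inr b => g b end).
Proof.
move=> f_inj g_inj fg [a|b] [a'|b'] /= eq_fg.
- by rewrite (f_inj _ _ eq_fg).
- by case: (fg _ _ eq_fg).
- by case: (fg _ _ (esym eq_fg)).
- by rewrite (g_inj _ _ eq_fg).
Qed.

Definition scons (A : Type) (a : A) (f : nat -> A) (i : nat) : A :=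
  if i is i'.+1 then f i' else a.

Section SplitChain.
Variables (T : finType) (e : rel T).

Record split_chain (m : nat) (S : {set T}) (v x : nat -> T) (d : nat -> bool) :
    Prop := SplitChain {
  chain_mem : forall i, i <= m -> v i \in S;
  chain_below : forall i j, j < i <= m -> e (v i) (x j) = d j;
  chain_diag : forall i, i < m -> e (v i) (x i) = ~~ d i;
  chain_x_inj : {in gtn m &, injective x};
  chain_v_inj : {in gtn m.+1 &, injective v};
  (* For [i < j], [x j] is chosen after [v i] is set aside, so the two may coincide. *)
  chain_vx : forall i j, i <= m -> j < m -> v i = x j -> i < j
}.

Lemma split_chain_cons m (S S' : {set T}) v x d z d0 v0 :
  {in S', forall y, [/\ y \in S, y != z & e y z = d0]} ->
  v0 \in S -> v0 != z -> e v0 z = ~~ d0 -> split_chain m S' v x d ->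
  split_chain m.+1 S (scons v0 v) (scons z x) (scons d0 d).
Proof.
move=> S'P v0S v0z ev0 ch.
have v0S' : v0 \notin S'.
  by apply/negP => /S'P [_ _]; rewrite ev0 => /Bool.no_fixpoint_negb.
have zS' : z \notin S' by apply/negP => /S'P [_ /eqP].
have xz j : j < m -> x j != z.
  move=> jm; apply/eqP => xjz.
  have [_ _ ej] := S'P _ (chain_mem ch (ltnW jm)).
  have [_ _ ej1] := S'P _ (chain_mem ch jm).
  move: (chain_diag ch jm) (chain_below ch (j := j) (i := j.+1)).
  by rewrite xjz ej ej1 ltnSn jm => -> /(_ isT); case: (d j).
split.
- by case=> [|i] //= /(chain_mem ch) /S'P [].
- case=> [|i] [|j] //= hij; last exact: chain_below ch _ _ hij.
  by have [] := S'P _ (chain_mem ch hij).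
- by case=> [|i] //= /(chain_diag ch).
- case=> [|i] [|j] //= im jm.
  + by move/esym/eqP; rewrite (negPf (xz j jm)).
  + by move/eqP; rewrite (negPf (xz i im)).
  + by move/(chain_x_inj ch im jm) ->.
- case=> [|i] [|j] //= im jm.
  + by move=> v0v; move: v0S'; rewrite v0v (chain_mem ch jm).
  + by move=> vv0; move: v0S'; rewrite -vv0 (chain_mem ch im).
  + by move/(chain_v_inj ch im jm) ->.
- case=> [|i] [|j] //= im jm.
  + by move/eqP; rewrite (negPf v0z).
  + by move=> vz; move: zS'; rewrite -vz (chain_mem ch im).
  + exact: chain_vx ch _ _ im jm.
Qed.

Hypothesis e_irr : irreducible_graph e.

Lemma irreducible_distinguish (u w : T) : u != w ->
  exists z, [/\ z != u, z != w & e u z != e w z].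
Proof.
move=> uw; have [/existsP [z /and3P [zu zw ez]]|none] :=
  boolP [exists z, [&& z != u, z != w & e u z != e w z]]; first by exists z.
case/eqP: uw; apply: e_irr => z zu zw; apply/eqP.
by move/existsPn/(_ z): none; rewrite zu zw negbK.
Qed.

Lemma irreducible_split (S : {set T}) m : 2 ^ m.+1 <= #|S| ->
  exists z d0 v0 (S' : {set T}),
    [/\ 2 ^ m <= #|S'|, {in S', forall y, [/\ y \in S, y != z & e y z = d0]},
        v0 \in S, v0 != z & e v0 z = ~~ d0].
Proof.
move=> leS; have /card_gt1P [u [w [uS wS uw]]] : 1 < #|S|.
  by apply: leq_trans leS; rewrite expnS; have := expn_gt0 2 m; lia.
have [z [zu zw ez]] := irreducible_distinguish uw.
have pick b : exists v0, [/\ v0 \in S, v0 != z & e v0 z = b].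
  case: (eqVneq (e u z) b) => [euz | nb]; first by exists u; rewrite eq_sym.
  exists w; rewrite eq_sym; split=> //.
  by move: ez nb; case: (e u z) (e w z) b => [] [] [].
exists z; have := cardsID [set y | e y z] (S :\ z); have := cardsD1 z S.
case: (leqP (2 ^ m) #|(S :\ z) :&: [set y | e y z]|) => [big | small] hz hcard.
- have [v0 [v0S v0z ev0]] := pick false; exists true, v0, ((S :\ z) :&: [set y | e y z]).
  by split=> // y; rewrite !inE => /andP [/andP [-> ->] ->].
- have [v0 [v0S v0z ev0]] := pick true; exists false, v0, ((S :\ z) :\: [set y | e y z]).
  split=> //; first by move: leS; rewrite expnS; lia.
  by move=> y; rewrite !inE => /andP [/negPf -> /andP [-> ->]].
Qed.

Lemma irreducible_split_chain m (S : {set T}) : 2 ^ m <= #|S| ->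
  exists v x d, split_chain m S v x d.
Proof.
elim: m S => [|m IH] S leS.
  have /card_gt0P [w wS] : 0 < #|S| by [].
  exists (fun=> w), (fun=> w), (fun=> false).
  by split=> // i j; rewrite ?inE => *; lia.
have [z [d0 [v0 [S' [leS' S'P v0S v0z ev0]]]]] := irreducible_split leS.
have [v [x [d ch]]] := IH S' leS'.
by exists (scons v0 v), (scons z x), (scons d0 d); apply: split_chain_cons ch.
Qed.

End SplitChain.

Fixpoint ramsey_bound (n : nat) : nat :=
  if n is n'.+1 then (ramsey_bound n').*2.+2 else 0.

Section OrderedRamsey.
Variables (A : eqType) (col bad : rel A).
Hypothesis bad_functional : forall i j1 j2, bad i j1 -> bad i j2 -> j1 = j2.

Definition colour_pair (p q : A * bool) := (col p.1 q.1 == p.2) && ~~ bad p.1 q.1.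

Lemma greedy_colouring n (L : seq A) : uniq L -> ramsey_bound n <= size L ->
  exists R : seq (A * bool),
    [/\ size R = n, subseq (map fst R) L & pairwise colour_pair R].
Proof.
elim: n L => [|n IH] L uL hL; first by exists [::]; rewrite sub0seq.
case: L uL hL => [|i L] //; rewrite cons_uniq => /andP [_ uL] hL.
pose L' := filter (predC (bad i)) L.
have szL' : size L <= size L' + 1.
  have := count_uniq_le1 uL (@bad_functional i).
  by rewrite size_filter -(count_predC (bad i) L); lia.
have [c hc] := count_majority (col i) L'.
have big_c : ramsey_bound n <= size [seq j <- L' | col i j == c].
  by move: hL; rewrite /= size_filter; lia.
have [R [szR subR pR]] := IH _ (filter_uniq _ (filter_uniq _ uL)) big_c.
exists ((i, c) :: R); split; first by rewrite /= szR.
  rewrite /= eqxx; apply: subseq_trans subR _.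
  exact: subseq_trans (filter_subseq _ _) (filter_subseq _ _).
rewrite pairwise_cons pR andbT; apply/allP => p /(map_f fst)/(mem_subseq subR).
by rewrite !mem_filter => /and3P [ci nb _]; rewrite /colour_pair /= ci.
Qed.

Lemma ordered_ramsey n (L : seq A) : uniq L -> ramsey_bound n.*2 <= size L ->
  exists (s : seq A) (C : bool), [/\ n <= size s, subseq s L &
    pairwise (fun i j => (col i j == C) && ~~ bad i j) s].
Proof.
move=> uL hL; have [R [szR subR pR]] := greedy_colouring uL hL.
have [C hC] := count_majority snd R.
exists (map fst [seq p <- R | p.2 == C]), C; split.
- by rewrite size_map size_filter -leq_double -szR.
- exact: subseq_trans (map_subseq _ (filter_subseq _ _)) subR.
rewrite pairwise_map.
apply: (sub_in_pairwise (P := fun p => p.2 == C)) (filter_all _ _) (pairwise_filter _ pR).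
by move=> p q /eqP pC _; rewrite /colour_pair /relpre /= pC.
Qed.

End OrderedRamsey.

Section Pattern.
Variables (T : finType) (e : rel T).

Record bipartite_pattern n (a b : 'I_n -> T) (D C : bool) : Prop := BipartitePattern {
  pattern_inj_l : injective a;
  pattern_inj_r : injective b;
  pattern_disjoint : forall s t, a s != b t;
  pattern_edge : forall s t,
    e (a s) (b t) = if s < t then C else if t < s then D else ~~ D
}.

Lemma split_chain_ramsey m (S : {set T}) v x d n :
  split_chain e m S v x d -> (ramsey_bound n.*2).*2 <= m ->
  exists (idx : 'I_n -> nat) D C,
    (forall t, idx t < m /\ d (idx t) = D) /\
    (forall s t : 'I_n, s < t ->
       [&& idx s < idx t, e (v (idx s)) (x (idx t)) == C & v (idx s) != x (idx t)]).
Proof.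
move=> ch hm; have [D hD] := count_majority d (iota 0 m).
pose bad i j := (j < m) && (v i == x j).
have bad_functional i j1 j2 : bad i j1 -> bad i j2 -> j1 = j2.
  move=> /andP [j1m /eqP e1] /andP [j2m /eqP e2].
  by apply: (chain_x_inj ch j1m j2m); rewrite -e1 -e2.
have big_L : ramsey_bound n.*2 <= size [seq j <- iota 0 m | d j == D].
  by rewrite size_filter; move: hD; rewrite size_iota; lia.
have [s [C [szs subL ps]]] := ordered_ramsey (fun i j => e (v i) (x j))
  bad_functional (filter_uniq _ (iota_uniq 0 m)) big_L.
have idx_s (t : 'I_n) : t < size s := leq_trans (ltn_ord t) szs.
have idx_in (t : 'I_n) : nth 0 s t < m /\ d (nth 0 s t) = D.
  have /(mem_subseq subL) : nth 0 s t \in s by apply/mem_nth.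
  by rewrite mem_filter mem_iota => /andP [/eqP -> /andP [_ ->]].
have /(pairwiseP 0) s_lt : pairwise ltn s.
  apply: subseq_pairwise subL (pairwise_filter _ _).
  by rewrite -sorted_pairwise ?iota_ltn_sorted //; exact: ltn_trans.
have /(pairwiseP 0) s_col := ps.
exists (fun t => nth 0 s t), D, C; split=> // s1 t st.
have /andP [-> ] := s_col _ _ (idx_s s1) (idx_s t) st.
rewrite /bad (idx_in t).1 => ->; rewrite !andbT.
exact: (s_lt _ _ (idx_s s1) (idx_s t) st).
Qed.

Lemma split_chain_pattern m (S : {set T}) v x d n (idx : 'I_n -> nat) D C :
  split_chain e m S v x d -> (forall t, idx t < m /\ d (idx t) = D) ->
  (forall s t : 'I_n, s < t ->
     [&& idx s < idx t, e (v (idx s)) (x (idx t)) == C & v (idx s) != x (idx t)]) ->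
  bipartite_pattern (fun t => v (idx t)) (fun t => x (idx t)) D C.
Proof.
move=> ch idx_in idx_lt.
have idx_inj : injective idx.
  move=> s t eq_idx; apply/val_inj/eqP; case: (ltngtP s t) => // [st | ts].
  - by have := idx_lt _ _ st; rewrite eq_idx ltnn.
  - by have := idx_lt _ _ ts; rewrite eq_idx ltnn.
split.
- move=> s t eq_v; apply: idx_inj.
  exact (chain_v_inj ch (ltnW (idx_in s).1) (ltnW (idx_in t).1) eq_v).
- move=> s t eq_x; apply: idx_inj.
  exact (chain_x_inj ch (idx_in s).1 (idx_in t).1 eq_x).
- move=> s t; apply/eqP => vx.
  have := chain_vx ch (ltnW (idx_in s).1) (idx_in t).1 vx.
  case: (ltngtP s t) => [st | ts | /val_inj ->]; last by rewrite ltnn.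
  + by have /and3P [_ _] := idx_lt _ _ st; rewrite vx eqxx.
  + by have /and3P [/ltnW] := idx_lt _ _ ts; rewrite leqNgt => /negPf ->.
- move=> s t; case: (ltngtP s t) => [st | ts | /val_inj ->].
  + by have /and3P [_ /eqP] := idx_lt _ _ st.
  + have /and3P [ts' _ _] := idx_lt _ _ ts.
    by rewrite (chain_below ch) ?ts' ?(ltnW (idx_in s).1) ?(idx_in t).2.
  + by rewrite (chain_diag ch) ?(idx_in t).1 ?(idx_in t).2.
Qed.

Hypothesis e_simple : simple_graph e.

Lemma contains_Irr_induced k (f : irr_vertex k -> T) : injective f ->
  (forall i j, e (f (inl i)) (f (inr j)) = (i <= j)) \/
  (forall i j, e (f (inl i)) (f (inr j)) = (i == j)) \/
  (forall i j, e (f (inl i)) (f (inr j)) = (i != j)) ->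
  contains_Irr k e.
Proof.
move=> f_inj adj; exists (fun u w => e (f u) (f w)); split; last by exists f.
case: e_simple => e_sym e_irrefl; split=> //.
by split=> [u w|u]; [apply: e_sym | apply: e_irrefl].
Qed.

Lemma bipartite_pattern_contains_Irr k a b D C :
  @bipartite_pattern k.+1 a b D C -> contains_Irr k e.
Proof.
case=> a_inj b_inj ab_disj ab_edge; have [e_sym _] := e_simple.
have ord_eqE (i j : 'I_k) : (i == j) = (i == j :> nat) by [].
pose lo (i : 'I_k) : 'I_k.+1 := widen_ord (leqnSn k) i.
have lo_inj : injective lo by move=> i j [] /val_inj.
pose f u := match u with inl i => a (lo i) | inr j => b (lo j) end.
have f_inj : injective f.
  apply: inj_case_sum (inj_comp a_inj lo_inj) (inj_comp b_inj lo_inj) _.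
  by move=> i j; apply/eqP/ab_disj.
have f_edge i j : e (f (inl i)) (f (inr j)) =
    if i < j then C else if j < i then D else ~~ D := ab_edge _ _.
case: D C ab_edge f_edge => [] [] ab_edge f_edge.
- apply: (contains_Irr_induced f_inj); right; right=> i j.
  by rewrite f_edge ord_eqE; case: ltngtP.
- (* [a s] and [b t] are adjacent iff [t < s], so pair [b i] with [a (i + 1)]. *)
  pose g u := match u with inl i => b (lo i) | inr j => a (lift ord0 j) end.
  have g_inj : injective g.
    apply: inj_case_sum (inj_comp b_inj lo_inj) (inj_comp a_inj (@lift_inj _ ord0)) _.
    by move=> i j; apply/eqP; rewrite eq_sym ab_disj.
  apply: (contains_Irr_induced g_inj); left=> i j /=.
  by rewrite e_sym ab_edge lift0 /= -[i <= j]ltnS; case: ltngtP.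
- apply: (contains_Irr_induced f_inj); left=> i j.
  by rewrite f_edge; case: ltngtP.
- apply: (contains_Irr_induced f_inj); right; left=> i j.
  by rewrite f_edge ord_eqE; case: ltngtP.
Qed.

End Pattern.

Theorem theorem3p29 :
  forall k : nat, (1 <= k)%N ->
  exists N : nat,
    forall (T : finType) (e : rel T),
      simple_graph e -> irreducible_graph e -> (N <= #|T|)%N ->
      contains_Irr k e.
Proof.
move=> k _; pose m := (ramsey_bound k.+1.*2).*2.
exists (2 ^ m) => T e e_simple e_irr bigT.
have bigS : 2 ^ m <= #|[set: T]| by rewrite cardsT.
have [v [x [d chain]]] := irreducible_split_chain e_irr bigS.
have [idx [D [C [idx_in idx_lt]]]] := split_chain_ramsey (n := k.+1) chain (leqnn m).
exact (bipartite_pattern_contains_Irr e_simple (split_chain_pattern chain idx_in idx_lt)).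
Qed.
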